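(* Let $f_1,f_2$ be strongly hyperbolic functions and let $p_1,p_2,p_3\in\mathbb{R}^2$ be three points in admissible position. Then either there exist $a_0>0$, $b_0,c_0\in\mathbb{R}$ such that $\overline{f_{a_0,b_0,c_0}}$ contains $p_1,p_2,p_3$, or there exist $s_0<0$, $t_0\in\mathbb{R}$ such that $\overline{l_{s_0,t_0}}$ contains $p_1,p_2,p_3$.
   Context: Identify $\mathbb{S}^1$ with $\mathbb{R}\cup\{\infty\}$, $\mathcal{P}=\mathbb{S}^1\times\mathbb{S}^1\supset\mathbb{R}^2$, $\mathbb{R}^+=(0,\infty)$. A function $f:\mathbb{R}^+\to\mathbb{R}^+$ is strongly hyperbolic if: (1) $\lim_{x\to0+}f(x)=+\infty$, $\lim_{x\to+\infty}f(x)=0$; (2) $f$ strictly convex; (3) $\lim_{x\to+\infty}f(x+b)/f(x)=1$ for each $b\in\mathbb{R}$; (4) $f$ differentiable; (5) $\ln|f'|$ strictly convex. For $a>0$, $b,c\in\mathbb{R}$: $f_{a,b,c}(x)=af_1(x+b)+c$ for $x>-b$, $f_{a,b,c}(x)=-af_2(-x-b)+c$ for $x<-b$; $\overline{f_{a,b,c}}=\{(x,f_{a,b,c}(x)):x\ne-b\}\cup\{(-b,\infty),(\infty,c)\}$; $\overline{l_{s,t}}=\{(x,sx+t):x\in\mathbb{R}\}\cup\{(\infty,\infty)\}$. Three points are in admissible position if they are all contained in one set of the form $\{(x,sx+t):x\in\mathbb{R}\}\cup\{(\infty,\infty)\}$ with $s<0$, or of the form $\{(x,y)\in\mathbb{R}^2:(x-b)(y-c)=a\}\cup\{(\infty,c),(b,\infty)\}$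 with $a>0$, $b,c\in\mathbb{R}$. *)

From Stdlib Require Import Reals.
From Coquelicot Require Import Coquelicot.
Open Scope R_scope.

Definition strictly_convex_pos (g : R -> R) : Prop :=
  forall x y t, 0 < x -> 0 < y -> x <> y -> 0 < t < 1 ->
    g (t * x + (1 - t) * y) < t * g x + (1 - t) * g y.

(* f : R^+ -> R^+ is represented by f : R -> R; only values on (0,+oo) matter. *)
Definition strongly_hyperbolic (f : R -> R) : Prop :=
  (forall x, 0 < x -> 0 < f x) /\
  filterlim f (at_right 0) (Rbar_locally p_infty) /\
  filterlim f (Rbar_locally p_infty) (locally 0) /\
  strictly_convex_pos f /\
  (* (3) *)
  (forall b : R, filterlim (fun x => f (x + b) / f x) (Rbar_locally p_infty) (locally 1)) /\
  (forall x, 0 < x -> ex_derive f x) /\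
  (* (5) *)
  strictly_convex_pos (fun x => ln (Rabs (Derive f x))).

(* f_{a,b,c} built from f1 (right of -b) and f2 (left of -b); value at -b irrelevant *)
Definition fabc (f1 f2 : R -> R) (a b c : R) (x : R) : R :=
  if Rlt_dec (- b) x then a * f1 (x + b) + c else - a * f2 (- x - b) + c.

(* a finite point p in R^2 belongs to the closed graph \overline{f_{a,b,c}} *)
Definition in_fbar (f1 f2 : R -> R) (a b c : R) (p : R * R) : Prop :=
  fst p <> - b /\ snd p = fabc f1 f2 a b c (fst p).

Definition in_lbar (s t : R) (p : R * R) : Prop := snd p = s * fst p + t.

Definition on_hyperbola (a b c : R) (p : R * R) : Prop :=
  (fst p - b) * (snd p - c) = a.

Definition admissible (p1 p2 p3 : R * R) : Prop :=
  (exists s t, s < 0 /\ in_lbar s t p1 /\ in_lbar s t p2 /\ in_lbar s t p3) \/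
  (exists a b c, a > 0 /\ on_hyperbola a b c p1 /\ on_hyperbola a b c p2 /\
                 on_hyperbola a b c p3).

(* An affine change of coordinates puts the three points on the hyperbola y = 1/x, and the
   symmetry (x, y) -> (-x, -y), which exchanges f1 and f2, leaves two configurations: all
   points on the right branch, or one point on the left branch and two on the right.  Passing
   a f(x + B) + c through the points amounts to choosing the shift B so that the ratio of
   consecutive drops of the profile equals that of the data, which the intermediate value
   theorem provides.  Across the two branches, letting either pole approach a point gives the
   two signs.  On one branch the drop ratio blows up near the pole, while far out it comes
   arbitrarily close to the ratio of the gaps d1/d2, because the shift condition (3) forbids
   f' from decaying geometrically along an arithmetic progression; the hyperbola's own ratio
   exceeds d1/d2 by convexity. *)

From Stdlib Require Import Reals Lra Ranalysis5 Classical.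
From Coquelicot Require Import Coquelicot.
Open Scope R_scope.

Lemma derivable_pt_lim_le_of_right_quotients g x l S d :
  derivable_pt_lim g x l -> 0 < d ->
  (forall h, 0 < h < d -> g (x + h) - g x <= S * h) -> l <= S.
Proof.
  intros Hl Hd HS. apply Rnot_lt_le; intro HSl.
  destruct (Hl (l - S)) as [delta Hdelta]; [lra|].
  pose proof (cond_pos delta) as Hdelta0.
  set (h := Rmin (delta / 2) (d / 2)).
  assert (Hh : 0 < h <= delta / 2 /\ h <= d / 2).
  { unfold h; split; [split|]; [apply Rmin_glb_lt|apply Rmin_l|apply Rmin_r]; lra. }
  specialize (Hdelta h ltac:(lra) ltac:(rewrite Rabs_pos_eq; lra)).
  specialize (HS h ltac:(lra)).
  set (q := (g (x + h) - g x) / h) in Hdelta.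
  assert (Eq : g (x + h) - g x = q * h) by (unfold q; field; lra).
  apply Rabs_def2 in Hdelta. nra.
Qed.

Lemma derivable_pt_lim_ge_of_left_quotients g x l S d :
  derivable_pt_lim g x l -> 0 < d ->
  (forall h, 0 < h < d -> S * h <= g x - g (x - h)) -> S <= l.
Proof.
  intros Hl Hd HS. apply Rnot_lt_le; intro HlS.
  destruct (Hl (S - l)) as [delta Hdelta]; [lra|].
  pose proof (cond_pos delta) as Hdelta0.
  set (h := Rmin (delta / 2) (d / 2)).
  assert (Hh : 0 < h <= delta / 2 /\ h <= d / 2).
  { unfold h; split; [split|]; [apply Rmin_glb_lt|apply Rmin_l|apply Rmin_r]; lra. }
  specialize (Hdelta (- h) ltac:(lra) ltac:(rewrite Rabs_left; lra)).
  specialize (HS h ltac:(lra)).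
  replace (x + - h) with (x - h) in Hdelta by ring.
  set (q := (g (x - h) - g x) / - h) in Hdelta.
  assert (Eq : g x - g (x - h) = q * h) by (unfold q; field; lra).
  apply Rabs_def2 in Hdelta. nra.
Qed.

Section StrictlyConvex.

Variable g : R -> R.
Hypothesis g_convex : strictly_convex_pos g.

Lemma strictly_convex_chord x y z : 0 < x -> x < y -> y < z ->
  g y * (z - x) < (z - y) * g x + (y - x) * g z.
Proof.
  intros Hx Hxy Hyz.
  set (t := (z - y) / (z - x)).
  assert (Ht : 0 < t < 1).
  { unfold t; split; [apply Rdiv_lt_0_compat; lra|].
    apply Rlt_div_l; lra. }
  pose proof (g_convex x z t Hx ltac:(lra) ltac:(lra) Ht) as Hc.
  replace (t * x + (1 - t) * z) with y in Hc by (unfold t; field; lra).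
  replace ((z - y) * g x + (y - x) * g z)
    with ((t * g x + (1 - t) * g z) * (z - x)) by (unfold t; field; lra).
  apply Rmult_lt_compat_r; lra.
Qed.

Lemma strictly_convex_derive_le_slope x y : 0 < x -> x < y -> ex_derive g x ->
  Derive g x * (y - x) <= g y - g x.
Proof.
  intros Hx Hxy Hd.
  set (S := (g y - g x) / (y - x)).
  assert (ES : g y - g x = S * (y - x)) by (unfold S; field; lra).
  rewrite ES. apply Rmult_le_compat_r; [lra|].
  apply (derivable_pt_lim_le_of_right_quotients g x _ S (y - x));
    [apply is_derive_Reals, Derive_correct, Hd | lra |].
  intros h Hh.
  pose proof (strictly_convex_chord x (x + h) y Hx ltac:(lra) ltac:(lra)). nra.
Qed.

Lemma strictly_convex_slope_le_derive x y : 0 < x -> x < y -> ex_derive g y ->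
  g y - g x <= Derive g y * (y - x).
Proof.
  intros Hx Hxy Hd.
  set (S := (g y - g x) / (y - x)).
  assert (ES : g y - g x = S * (y - x)) by (unfold S; field; lra).
  rewrite ES. apply Rmult_le_compat_r; [lra|].
  apply (derivable_pt_lim_ge_of_left_quotients g y _ S (y - x));
    [apply is_derive_Reals, Derive_correct, Hd | lra |].
  intros h Hh.
  pose proof (strictly_convex_chord x (y - h) y Hx ltac:(lra) ltac:(lra)). nra.
Qed.

End StrictlyConvex.

Lemma IVT_pos_neg g a b : a < b -> (forall x, a <= x <= b -> continuous g x) ->
  0 < g a -> g b < 0 -> exists x, a <= x <= b /\ g x = 0.
Proof.
  intros Hab Hg Ha Hb.
  destruct (IVT_interv (fun x => - g x) a b) as [x [Hx Ex]]; try lra.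
  - intros x Hx. apply continuity_pt_opp, continuity_pt_filterlim, Hg, Hx.
  - exists x. split; [exact Hx|lra].
Qed.

Section StronglyHyperbolic.

Variable f : R -> R.
Hypothesis f_sh : strongly_hyperbolic f.

Lemma sh_pos x : 0 < x -> 0 < f x.
Proof. apply f_sh. Qed.

Lemma sh_ex_derive x : 0 < x -> ex_derive f x.
Proof. apply f_sh. Qed.

Lemma sh_convex : strictly_convex_pos f.
Proof. apply f_sh. Qed.

Lemma sh_eventually_lt e : 0 < e -> exists M, forall x, M < x -> f x < e.
Proof.
  intros He. destruct f_sh as (_ & _ & Hinf & _).
  exact (Hinf (fun y => y < e) (open_lt e 0 He)).
Qed.

Lemma sh_large_near_0 M d : 0 < d -> exists t, 0 < t < d /\ M < f t.
Proof.
  intros Hd. destruct f_sh as (_ & H0 & _).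
  destruct (H0 (fun y => M < y) (ex_intro _ M (fun y Hy => Hy))) as [eps Heps].
  pose proof (cond_pos eps) as Heps0.
  set (t := Rmin eps d / 2).
  assert (Ht : 0 < t < Rmin eps d) by (unfold t; pose proof (Rmin_glb_lt eps d 0); lra).
  pose proof (Rmin_l eps d). pose proof (Rmin_r eps d).
  exists t; split; [lra|]. apply Heps; [|lra].
  change (Rabs (t - 0) < eps). rewrite Rminus_0_r, Rabs_pos_eq; lra.
Qed.

Lemma sh_shift_ratio_eventually_gt h q : q < 1 ->
  exists M, forall x, M < x -> q < f (x + h) / f x.
Proof.
  intros Hq. destruct f_sh as (_ & _ & _ & _ & Hratio & _).
  exact (Hratio h (fun y => q < y) (open_gt q 1 Hq)).
Qed.

Lemma sh_decreasing x y : 0 < x -> x < y -> f y < f x.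
Proof.
  intros Hx Hxy. apply Rnot_le_lt; intro Hle.
  assert (Hbeyond : forall z, y < z -> f y <= f z).
  { intros z Hz. apply Rnot_lt_le; intro Hlt.
    pose proof (strictly_convex_chord f sh_convex x y z Hx Hxy Hz). nra. }
  destruct (sh_eventually_lt (f y) (sh_pos y ltac:(lra))) as [M HM].
  set (z := Rmax M y + 1).
  pose proof (Rmax_l M y). pose proof (Rmax_r M y).
  specialize (HM z ltac:(unfold z; lra)). specialize (Hbeyond z ltac:(unfold z; lra)).
  lra.
Qed.

Lemma sh_exists_large_derive_gt_shift h k T : 0 < h -> 1 < k ->
  exists t, T < t /\ k * Derive f (t + h) < Derive f t.
Proof.
  intros Hh Hk. apply NNPP; intro Hno.
  set (T' := Rmax T 1).
  assert (HT' : T <= T' /\ 1 <= T') by (split; [apply Rmax_l|apply Rmax_r]).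
  assert (Hder : forall t, T' < t -> Derive f t <= k * Derive f (t + h)).
  { intros t Ht. apply Rnot_lt_le; intro Hlt. apply Hno. exists t. split; [lra|exact Hlt]. }
  set (g := fun t => k * f (t + h) - f t).
  (* [g] is nondecreasing past [T'] and vanishes at infinity, so [k f(t+h) <= f t] there *)
  assert (Hg_mono : forall u v, T' < u -> u <= v -> g u <= g v).
  { intros u v Hu Huv.
    destruct (MVT_cor4 g (fun t => k * Derive f (t + h) - Derive f t) v (v - u))
      with (b := u) as [c [Ec Hc]].
    - intros c Hc. apply Rabs_le_between' in Hc.
      unfold g. auto_derive; [repeat split; apply sh_ex_derive; lra|].
      change (Derive (fun x => f x)) with (Derive f). ring.
    - rewrite Rabs_left1; lra.
    - rewrite (Rabs_left1 (u - v)) in Hc by lra. apply Rabs_le_between' in Hc.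
      pose proof (Hder c ltac:(lra)). nra. }
  assert (Hg_nonpos : forall t, T' < t -> g t <= 0).
  { intros t Ht. apply Rnot_lt_le; intro Hgt.
    destruct (sh_eventually_lt (g t / k)) as [M HM]; [apply Rdiv_lt_0_compat; lra|].
    set (s := Rmax M t + 1).
    assert (Hs : M < s /\ t < s)
      by (unfold s; split; [pose proof (Rmax_l M t) | pose proof (Rmax_r M t)]; lra).
    specialize (HM (s + h) ltac:(lra)). apply Rlt_div_r in HM; [|lra].
    pose proof (Hg_mono t s Ht ltac:(lra)) as Hgs.
    pose proof (sh_pos s ltac:(lra)).
    unfold g at 2 in Hgs. lra. }
  destruct (sh_shift_ratio_eventually_gt h (1 / k)) as [M HM]; [apply Rlt_div_l; lra|].
  set (t := Rmax M T' + 1).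
  assert (Ht : M < t /\ T' < t)
    by (unfold t; split; [pose proof (Rmax_l M T') | pose proof (Rmax_r M T')]; lra).
  specialize (HM t ltac:(lra)). apply Rlt_div_r in HM; [|apply sh_pos; lra].
  specialize (Hg_nonpos t ltac:(lra)). unfold g in Hg_nonpos.
  assert (k * (1 / k * f t) = f t) by (field; lra).
  nra.
Qed.

Lemma sh_drop_ratio_attained d1 d2 r : 0 < d1 -> 0 < d2 -> d1 < r * d2 ->
  exists t, 0 < t /\ f t - f (t + d1) = r * (f (t + d1) - f (t + d1 + d2)).
Proof.
  intros Hd1 Hd2 Hr.
  assert (Hr0 : 0 < r) by nra.
  set (psi t := f t - f (t + d1) - r * (f (t + d1) - f (t + d1 + d2))).
  destruct (sh_large_near_0 ((1 + r) * f d1) 1) as [t0 [Ht0 Hft0]]; [lra|].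
  assert (Hpsi0 : 0 < psi t0).
  { pose proof (sh_decreasing d1 (t0 + d1) Hd1 ltac:(lra)).
    pose proof (sh_pos (t0 + d1 + d2) ltac:(lra)).
    unfold psi. nra. }
  set (k := r * d2 / d1).
  destruct (sh_exists_large_derive_gt_shift (d1 + d2) k t0) as [t1 [Ht01 Hder]];
    [lra | unfold k; apply Rlt_div_r; lra |].
  replace (t1 + (d1 + d2)) with (t1 + d1 + d2) in Hder by ring.
  (* both drops are bounded by tangents, at [t1] and [t1 + d1 + d2], whose slopes [Hder] compares *)
  assert (Hpsi1 : psi t1 < 0).
  { pose proof (strictly_convex_derive_le_slope f sh_convex t1 (t1 + d1)
      ltac:(lra) ltac:(lra) (sh_ex_derive t1 ltac:(lra))) as Hleft.
    pose proof (strictly_convex_slope_le_derive f sh_convex (t1 + d1) (t1 + d1 + d2)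
      ltac:(lra) ltac:(lra) (sh_ex_derive (t1 + d1 + d2) ltac:(lra))) as Hright.
    replace (t1 + d1 - t1) with d1 in Hleft by ring.
    replace (t1 + d1 + d2 - (t1 + d1)) with d2 in Hright by ring.
    apply (Rmult_lt_compat_l d1) in Hder; [|lra].
    replace (d1 * (k * Derive f (t1 + d1 + d2))) with (r * (d2 * Derive f (t1 + d1 + d2)))
      in Hder by (unfold k; field; lra).
    apply (Rmult_le_compat_l r) in Hright; [|lra].
    unfold psi. nra. }
  destruct (IVT_pos_neg psi t0 t1) as [t [Ht Ept]]; try lra.
  - intros t Ht. apply (@ex_derive_continuous R_AbsRing R_NormedModule). unfold psi.
    auto_derive. repeat split; apply sh_ex_derive; lra.
  - exists t. split; [lra|]. unfold psi in Ept. lra.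
Qed.

End StronglyHyperbolic.

Lemma sh_two_branch_ratio_attained f1 f2 d e s :
  strongly_hyperbolic f1 -> strongly_hyperbolic f2 -> 0 < d -> 0 < e -> 1 < s ->
  exists t, 0 < t < d /\ f1 t + f2 (d - t) = s * (f1 t - f1 (t + e)).
Proof.
  intros H1 H2 Hd He Hs.
  set (psi t := (s - 1) * f1 t - s * f1 (t + e) - f2 (d - t)).
  destruct (sh_large_near_0 f1 H1 ((s * f1 e + f2 (d / 2)) / (s - 1)) (d / 2))
    as [t0 [Ht0 Hft0]]; [lra|].
  assert (Hpsi0 : 0 < psi t0).
  { apply Rlt_div_l in Hft0; [|lra].
    pose proof (sh_decreasing f1 H1 e (t0 + e) He ltac:(lra)).
    pose proof (sh_decreasing f2 H2 (d / 2) (d - t0) ltac:(lra) ltac:(lra)).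
    unfold psi. nra. }
  destruct (sh_large_near_0 f2 H2 ((s - 1) * f1 (d / 2)) (d / 2)) as [u [Hu Hfu]]; [lra|].
  assert (Hpsi1 : psi (d - u) < 0).
  { pose proof (sh_decreasing f1 H1 (d / 2) (d - u) ltac:(lra) ltac:(lra)).
    pose proof (sh_pos f1 H1 (d - u + e) ltac:(lra)).
    unfold psi. replace (d - (d - u)) with u by ring. nra. }
  destruct (IVT_pos_neg psi t0 (d - u)) as [t [Ht Ept]]; try lra.
  - intros t Ht. apply (@ex_derive_continuous R_AbsRing R_NormedModule). unfold psi.
    auto_derive.
    repeat split; [apply (sh_ex_derive f1 H1) .. | apply (sh_ex_derive f2 H2)]; lra.
  - exists t. split; [lra|]. unfold psi in Ept. lra.
Qed.

Definition fbar_through (f1 f2 : R -> R) (p1 p2 p3 : R * R) : Prop :=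
  exists a b c, a > 0 /\ in_fbar f1 f2 a b c p1 /\
    in_fbar f1 f2 a b c p2 /\ in_fbar f1 f2 a b c p3.

Lemma fbar_through_swap12 f1 f2 p1 p2 p3 :
  fbar_through f1 f2 p1 p2 p3 -> fbar_through f1 f2 p2 p1 p3.
Proof. intros (a & b & c & H). exists a, b, c. tauto. Qed.

Lemma fbar_through_swap23 f1 f2 p1 p2 p3 :
  fbar_through f1 f2 p1 p2 p3 -> fbar_through f1 f2 p1 p3 p2.
Proof. intros (a & b & c & H). exists a, b, c. tauto. Qed.

Lemma in_fbar_right f1 f2 a b c x y :
  - b < x -> y = a * f1 (x + b) + c -> in_fbar f1 f2 a b c (x, y).
Proof.
  intros Hx Hy. unfold in_fbar, fabc; simpl. split; [lra|].
  destruct (Rlt_dec (- b) x); [exact Hy | lra].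
Qed.

Lemma in_fbar_left f1 f2 a b c x y :
  x < - b -> y = - a * f2 (- x - b) + c -> in_fbar f1 f2 a b c (x, y).
Proof.
  intros Hx Hy. unfold in_fbar, fabc; simpl. split; [lra|].
  destruct (Rlt_dec (- b) x); [lra | exact Hy].
Qed.

Lemma in_fbar_reflect f1 f2 a b c x y :
  in_fbar f2 f1 a b c (- x, - y) -> in_fbar f1 f2 a (- b) (- c) (x, y).
Proof.
  unfold in_fbar, fabc; simpl. intros [Hx Hy]. split; [lra|].
  destruct (Rlt_dec (- b) (- x)), (Rlt_dec (- - b) x); try lra.
  - replace (- x - - b) with (- x + b) by ring. lra.
  - replace (x + - b) with (- - x - b) by ring. lra.
Qed.

Definition affine_pt (a b c : R) (p : R * R) : R * R := (fst p + b, a * snd p + c).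

Lemma in_fbar_affine f1 f2 a b c a0 b0 c0 p : in_fbar f1 f2 a0 b0 c0 p ->
  in_fbar f1 f2 (a * a0) (b0 - b) (a * c0 + c) (affine_pt a b c p).
Proof.
  destruct p as [x y]. unfold in_fbar, fabc, affine_pt; simpl. intros [Hx Hy]. split; [lra|].
  destruct (Rlt_dec (- b0) x), (Rlt_dec (- (b0 - b)) (x + b)); try lra; rewrite Hy.
  - replace (x + b + (b0 - b)) with (x + b0) by ring. ring.
  - replace (- (x + b) - (b0 - b)) with (- x - b0) by ring. ring.
Qed.

Lemma fbar_through_affine f1 f2 a b c p1 p2 p3 : 0 < a ->
  fbar_through f1 f2 p1 p2 p3 ->
  fbar_through f1 f2 (affine_pt a b c p1) (affine_pt a b c p2) (affine_pt a b c p3).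
Proof.
  intros Ha (a0 & b0 & c0 & Ha0 & H1 & H2 & H3).
  exists (a * a0), (b0 - b), (a * c0 + c).
  split; [apply Rmult_lt_0_compat; lra|]. split; [|split]; apply in_fbar_affine; assumption.
Qed.

Lemma affine_through3 u1 u2 u3 v1 v2 v3 r : u3 < u2 -> v3 < v2 ->
  u1 - u2 = r * (u2 - u3) -> v1 - v2 = r * (v2 - v3) ->
  exists a c, 0 < a /\ v1 = a * u1 + c /\ v2 = a * u2 + c /\ v3 = a * u3 + c.
Proof.
  intros H32 K32 Hu Hv.
  set (a := (v2 - v3) / (u2 - u3)).
  assert (Ea : a * (u2 - u3) = v2 - v3) by (unfold a; field; lra).
  assert (Ea1 : a * (u1 - u2) = v1 - v2) by (rewrite Hu, Hv, <- Ea; ring).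
  exists a, (v2 - a * u2). split; [apply Rdiv_lt_0_compat; lra|]. lra.
Qed.

Definition hyp_pt (u : R) : R * R := (u, / u).

Lemma fbar_through_hyp_pos f1 f2 u1 u2 u3 : strongly_hyperbolic f1 ->
  0 < u1 -> u1 < u2 -> u2 < u3 ->
  fbar_through f1 f2 (hyp_pt u1) (hyp_pt u2) (hyp_pt u3).
Proof.
  intros H1 Hu1 H12 H23.
  assert (Hinv : / u3 < / u2 /\ / u2 < / u1) by (split; apply Rinv_lt_contravar; nra).
  set (r := (/ u1 - / u2) / (/ u2 - / u3)).
  destruct (sh_drop_ratio_attained f1 H1 (u2 - u1) (u3 - u2) r) as [t [Ht Et]]; try lra.
  { replace (r * (u3 - u2)) with ((u2 - u1) * (u3 / u1)) by (unfold r; field; lra).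
    assert (1 < u3 / u1) by (apply Rlt_div_r; lra). nra. }
  destruct (affine_through3 (f1 t) (f1 (t + (u2 - u1))) (f1 (t + (u2 - u1) + (u3 - u2)))
    (/ u1) (/ u2) (/ u3) r) as (a & c & Ha & E1 & E2 & E3); try lra.
  { apply (sh_decreasing f1 H1); lra. }
  { unfold r. field. lra. }
  exists a, (t - u1), c. split; [lra|].
  split; [|split]; apply in_fbar_right; try lra.
  - replace (u1 + (t - u1)) with t by ring. exact E1.
  - replace (u2 + (t - u1)) with (t + (u2 - u1)) by ring. exact E2.
  - replace (u3 + (t - u1)) with (t + (u2 - u1) + (u3 - u2)) by ring. exact E3.
Qed.

Lemma fbar_through_hyp_neg_pos f1 f2 u1 u2 u3 :
  strongly_hyperbolic f1 -> strongly_hyperbolic f2 -> u1 < 0 -> 0 < u2 -> u2 < u3 ->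
  fbar_through f1 f2 (hyp_pt u1) (hyp_pt u2) (hyp_pt u3).
Proof.
  intros H1 H2 Hu1 Hu2 H23.
  assert (Hinv : / u1 < 0 /\ 0 < / u3 < / u2).
  { split; [apply Rinv_lt_0_compat; lra|]. split; [apply Rinv_0_lt_compat; lra|].
    apply Rinv_lt_contravar; nra. }
  set (s := (/ u2 - / u1) / (/ u2 - / u3)).
  destruct (sh_two_branch_ratio_attained f1 f2 (u2 - u1) (u3 - u2) s H1 H2) as [t [Ht Et]];
    try lra.
  { unfold s. apply Rlt_div_r; lra. }
  destruct (affine_through3 (- f2 (u2 - u1 - t)) (f1 t) (f1 (t + (u3 - u2)))
    (/ u1) (/ u2) (/ u3) (- s)) as (a & c & Ha & E1 & E2 & E3); try lra.
  { apply (sh_decreasing f1 H1); lra. }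
  { unfold s. field. lra. }
  exists a, (t - u2), c. split; [lra|]. unfold hyp_pt.
  split; [|split]; [apply in_fbar_left | apply in_fbar_right | apply in_fbar_right]; try lra.
  - replace (- u1 - (t - u2)) with (u2 - u1 - t) by ring. lra.
  - replace (u2 + (t - u2)) with t by ring. exact E2.
  - replace (u3 + (t - u2)) with (t + (u3 - u2)) by ring. exact E3.
Qed.

Lemma fbar_through_hyp_reflect f1 f2 u1 u2 u3 :
  fbar_through f2 f1 (hyp_pt (- u3)) (hyp_pt (- u2)) (hyp_pt (- u1)) ->
  fbar_through f1 f2 (hyp_pt u1) (hyp_pt u2) (hyp_pt u3).
Proof.
  unfold hyp_pt. rewrite !Rinv_opp.
  intros (a & b & c & Ha & H3 & H2 & H1).
  exists a, (- b), (- c). split; [exact Ha|].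
  split; [|split]; apply in_fbar_reflect; assumption.
Qed.

Lemma fbar_through_hyp f1 f2 u1 u2 u3 :
  strongly_hyperbolic f1 -> strongly_hyperbolic f2 -> u1 < u2 -> u2 < u3 ->
  u1 <> 0 -> u2 <> 0 -> u3 <> 0 ->
  fbar_through f1 f2 (hyp_pt u1) (hyp_pt u2) (hyp_pt u3).
Proof.
  intros H1 H2 H12 H23 N1 N2 N3.
  destruct (Rdichotomy u1 0 N1); [|apply fbar_through_hyp_pos; auto; lra].
  destruct (Rdichotomy u2 0 N2); [|apply fbar_through_hyp_neg_pos; auto; lra].
  apply fbar_through_hyp_reflect.
  destruct (Rdichotomy u3 0 N3);
    [apply fbar_through_hyp_pos | apply fbar_through_hyp_neg_pos]; auto; lra.
Qed.

Lemma sorted3_wlog (P : R -> R -> R -> Prop) :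
  (forall u v w, P u v w -> P v u w) -> (forall u v w, P u v w -> P u w v) ->
  (forall u v w, u < v -> v < w -> P u v w) ->
  forall u v w, u <> v -> u <> w -> v <> w -> P u v w.
Proof.
  intros S12 S23 Hsorted u v w Nuv Nuw Nvw.
  destruct (Rdichotomy u v Nuv), (Rdichotomy u w Nuw), (Rdichotomy v w Nvw);
  first
  [ apply Hsorted; lra
  | apply S23, Hsorted; lra
  | apply S12, Hsorted; lra
  | apply S12, S23, Hsorted; lra
  | apply S23, S12, Hsorted; lra
  | apply S12, S23, S12, Hsorted; lra
  | exfalso; lra ].
Qed.

Lemma on_hyperbola_affine_hyp a b c p : 0 < a -> on_hyperbola a b c p ->
  fst p - b <> 0 /\ p = affine_pt a b c (hyp_pt (fst p - b)).
Proof.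
  destruct p as [x y]. unfold on_hyperbola, affine_pt, hyp_pt; simpl. intros Ha E.
  assert (N : x - b <> 0) by (intro Hz; rewrite Hz in E; lra).
  split; [exact N|]. f_equal; [ring|]. rewrite <- E. field. exact N.
Qed.

Lemma on_hyperbola_fst_inj a b c p q : 0 < a ->
  on_hyperbola a b c p -> on_hyperbola a b c q -> fst p = fst q -> p = q.
Proof.
  intros Ha Ep Eq Hpq.
  rewrite (proj2 (on_hyperbola_affine_hyp a b c p Ha Ep)),
    (proj2 (on_hyperbola_affine_hyp a b c q Ha Eq)), Hpq.
  reflexivity.
Qed.

Lemma fbar_through_hyperbola f1 f2 a b c p1 p2 p3 :
  strongly_hyperbolic f1 -> strongly_hyperbolic f2 -> 0 < a ->
  p1 <> p2 -> p1 <> p3 -> p2 <> p3 ->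
  on_hyperbola a b c p1 -> on_hyperbola a b c p2 -> on_hyperbola a b c p3 ->
  fbar_through f1 f2 p1 p2 p3.
Proof.
  intros H1 H2 Ha D12 D13 D23 E1 E2 E3.
  assert (Hdist : forall p q, on_hyperbola a b c p -> on_hyperbola a b c q -> p <> q ->
    fst p - b <> fst q - b).
  { intros p q Ep Eq Npq Heq. apply Npq, (on_hyperbola_fst_inj a b c); auto; lra. }
  pose proof (Hdist p1 p2 E1 E2 D12) as D12'. pose proof (Hdist p1 p3 E1 E3 D13) as D13'.
  pose proof (Hdist p2 p3 E2 E3 D23) as D23'.
  destruct (on_hyperbola_affine_hyp a b c p1 Ha E1) as [N1 Ep1].
  destruct (on_hyperbola_affine_hyp a b c p2 Ha E2) as [N2 Ep2].
  destruct (on_hyperbola_affine_hyp a b c p3 Ha E3) as [N3 Ep3].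
  rewrite Ep1, Ep2, Ep3. apply fbar_through_affine; [exact Ha|].
  revert N1 N2 N3.
  apply (sorted3_wlog (fun u v w => u <> 0 -> v <> 0 -> w <> 0 ->
    fbar_through f1 f2 (hyp_pt u) (hyp_pt v) (hyp_pt w))); try assumption.
  - intros u v w H Nv Nu Nw. apply fbar_through_swap12, H; assumption.
  - intros u v w H Nu Nw Nv. apply fbar_through_swap23, H; assumption.
  - intros u v w Huv Hvw. apply fbar_through_hyp; assumption.
Qed.

Theorem lemma4p7 (f1 f2 : R -> R) (p1 p2 p3 : R * R) :
  strongly_hyperbolic f1 -> strongly_hyperbolic f2 ->
  p1 <> p2 -> p1 <> p3 -> p2 <> p3 ->
  admissible p1 p2 p3 ->
  (exists a0 b0 c0, a0 > 0 /\ in_fbar f1 f2 a0 b0 c0 p1 /\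
     in_fbar f1 f2 a0 b0 c0 p2 /\ in_fbar f1 f2 a0 b0 c0 p3) \/
  (exists s0 t0, s0 < 0 /\ in_lbar s0 t0 p1 /\ in_lbar s0 t0 p2 /\ in_lbar s0 t0 p3).
Proof.
  intros H1 H2 D12 D13 D23 [Hline | (a & b & c & Ha & E1 & E2 & E3)].
  - right. exact Hline.
  - left. exact (fbar_through_hyperbola f1 f2 a b c p1 p2 p3 H1 H2 Ha D12 D13 D23 E1 E2 E3).
Qed.
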